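(* Let $\Phi,\Psi,S,T$ be finite sets and let $(s,t,\varphi,\psi)$ be random variables with values in $S\times T\times\Phi\times\Psi$ such that $\varphi$ and $\psi$ are independent and the signals are entangled. Then for any $\varphi_1,\varphi_2\in\Phi$ with positive probability and any $t\in T$, $p(t\mid\varphi_1)=p(t\mid\varphi_2)$; indeed $p(t\mid\varphi)=p(t)$.
   Context: A joint distribution of $(s,t,\varphi,\psi)$ is disjoint if $\Pr\{\psi\mid\varphi,s\}=\Pr\{\psi\mid\varphi\}$ and $\Pr\{\varphi\mid\psi,t\}=\Pr\{\varphi\mid\psi\}$ (whenever the conditioning events have positive probability); classically generated if there exists a random variable $x$ independent of $(\varphi,\psi)$ such that $p(s,t\mid x,\varphi,\psi)=p(s\mid x,\varphi)\,p(t\mid x,\psi)$; entangled if it is disjoint and not classically generated. Here $\varphi,\psi$ are the players' states of nature and $s,t$ their signals. *)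

From mathcomp Require Import all_boot all_order all_algebra.
From mathcomp Require Import reals.
Set Implicit Arguments. Unset Strict Implicit. Unset Printing Implicit Defensive.
Import Order.TTheory GRing.Theory Num.Theory.
Local Open Scope ring_scope.

Section Dist.
Variables (R : realType) (S T Phi Psi : finType).

(* p s t a b = Pr{ s, t, varphi = a, psi = b } *)
Definition dist4 (p : S -> T -> Phi -> Psi -> R) : Prop :=
  (forall s t a b, 0 <= p s t a b) /\
  \sum_(s : S) \sum_(t : T) \sum_(a : Phi) \sum_(b : Psi) p s t a b = 1.

Section Marginals.
Variable p : S -> T -> Phi -> Psi -> R.
Definition pPhi a := \sum_(s : S) \sum_(t : T) \sum_(b : Psi) p s t a b.
Definition pPsi b := \sum_(s : S) \sum_(t : T) \sum_(a : Phi) p s t a b.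
Definition pT t := \sum_(s : S) \sum_(a : Phi) \sum_(b : Psi) p s t a b.
Definition pPhiPsi a b := \sum_(s : S) \sum_(t : T) p s t a b.
Definition pSPhi s a := \sum_(t : T) \sum_(b : Psi) p s t a b.
Definition pTPsi t b := \sum_(s : S) \sum_(a : Phi) p s t a b.
Definition pTPhi t a := \sum_(s : S) \sum_(b : Psi) p s t a b.
Definition pSPhiPsi s a b := \sum_(t : T) p s t a b.
Definition pTPhiPsi t a b := \sum_(s : S) p s t a b.
End Marginals.

Definition states_indep p : Prop :=
  forall a b, pPhiPsi p a b = pPhi p a * pPsi p b.

Definition disjoint p : Prop :=
  (forall s a b, 0 < pSPhi p s a -> 0 < pPhi p a ->
     pSPhiPsi p s a b / pSPhi p s a = pPhiPsi p a b / pPhi p a) /\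
  (forall t a b, 0 < pTPsi p t b -> 0 < pPsi p b ->
     pTPhiPsi p t a b / pTPsi p t b = pPhiPsi p a b / pPsi p b).

(* Classically generated: there is a random variable x (with values in a finite
   set X), jointly distributed with (s,t,varphi,psi) with marginal p, x independent
   of (varphi,psi), and p(s,t | x,varphi,psi) = p(s | x,varphi) p(t | x,psi). *)
Definition classically_generated p : Prop :=
  exists (X : finType) (q : X -> S -> T -> Phi -> Psi -> R),
    (forall x s t a b, 0 <= q x s t a b) /\
    (forall s t a b, \sum_(x : X) q x s t a b = p s t a b) /\
    (let qX x := \sum_(s : S) \sum_(t : T) \sum_(a : Phi) \sum_(b : Psi) q x s t a b in
     let qXPhiPsi x a b := \sum_(s : S) \sum_(t : T) q x s t a b in
     let qXPhi x a := \sum_(s : S) \sum_(t : T) \sum_(b : Psi) q x s t a b in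
     let qXPsi x b := \sum_(s : S) \sum_(t : T) \sum_(a : Phi) q x s t a b in
     let qXSPhi x s a := \sum_(t : T) \sum_(b : Psi) q x s t a b in
     let qXTPsi x t b := \sum_(s : S) \sum_(a : Phi) q x s t a b in
     (forall x a b, qXPhiPsi x a b = qX x * pPhiPsi p a b) /\
     (forall x s t a b, 0 < qXPhiPsi x a b ->
        q x s t a b / qXPhiPsi x a b =
        (qXSPhi x s a / qXPhi x a) * (qXTPsi x t b / qXPsi x b))).

Definition entangled p : Prop := disjoint p /\ ~ classically_generated p.

End Dist.

(* The second disjointness condition says p(phi | t, psi) = p(phi | psi), and
   independence of the states turns the right-hand side into p(phi); hence
   p(t, phi, psi) = p(phi) p(t, psi) whenever p(t, psi) > 0, and also, by
   nonnegativity, when p(t, psi) = 0.  Summing over psi gives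
   p(t, phi) = p(phi) p(t). *)
From Pilot Require Import Defs.
From mathcomp Require Import all_boot all_order all_algebra.
From mathcomp Require Import reals.
Set Implicit Arguments. Unset Strict Implicit. Unset Printing Implicit Defensive.
Import Order.TTheory GRing.Theory Num.Theory.
Local Open Scope ring_scope.

Section BobSideIndependence.
Variables (R : realType) (S T Phi Psi : finType).
Variable p : S -> T -> Phi -> Psi -> R.
Hypothesis p_ge0 : forall s t a b, 0 <= p s t a b.

Lemma pTPsiE t b : pTPsi p t b = \sum_a pTPhiPsi p t a b.
Proof. by rewrite /pTPsi /pTPhiPsi exchange_big. Qed.

Lemma pPsiE b : pPsi p b = \sum_t pTPsi p t b.
Proof. by rewrite /pPsi /pTPsi exchange_big. Qed.

Lemma pTPhiE t a : pTPhi p t a = \sum_b pTPhiPsi p t a b.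
Proof. by rewrite /pTPhi /pTPhiPsi exchange_big. Qed.

Lemma pTE t : pT p t = \sum_b pTPsi p t b.
Proof.
rewrite /pT /pTPsi [RHS]exchange_big; apply: eq_bigr => s _.
exact: exchange_big.
Qed.

Lemma pTPhiPsi_ge0 t a b : 0 <= pTPhiPsi p t a b.
Proof. exact: sumr_ge0. Qed.

Lemma pTPsi_ge0 t b : 0 <= pTPsi p t b.
Proof. by rewrite pTPsiE; apply: sumr_ge0 => a _; apply: pTPhiPsi_ge0. Qed.

Lemma pTPsi_le_pPsi t b : pTPsi p t b <= pPsi p b.
Proof.
rewrite pPsiE (bigD1 t) //= lerDl.
by apply: sumr_ge0 => t' _; apply: pTPsi_ge0.
Qed.

Lemma pTPhiPsi_eq0 t a b : pTPsi p t b = 0 -> pTPhiPsi p t a b = 0.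
Proof.
move/eqP; rewrite pTPsiE psumr_eq0 => [/allP/(_ a (mem_index_enum _))/eqP //|].
by move=> a' _; apply: pTPhiPsi_ge0.
Qed.

Lemma pTPhiPsi_factor :
  states_indep p -> Defs.disjoint p ->
  forall t a b, pTPhiPsi p t a b = pPhi p a * pTPsi p t b.
Proof.
move=> ind [_ dis] t a b.
have [tb0|tb_neq0] := eqVneq (pTPsi p t b) 0.
  by rewrite tb0 mulr0 pTPhiPsi_eq0.
have tb_gt0 : 0 < pTPsi p t b by rewrite lt0r tb_neq0 pTPsi_ge0.
have b_gt0 : 0 < pPsi p b := lt_le_trans tb_gt0 (pTPsi_le_pPsi t b).
have := dis t a b tb_gt0 b_gt0.
rewrite ind mulfK ?gt_eqF // => /(canRL (divfK tb_neq0)).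
by rewrite mulrC.
Qed.

Lemma pTPhi_factor :
  states_indep p -> Defs.disjoint p ->
  forall t a, pTPhi p t a = pPhi p a * pT p t.
Proof.
move=> ind dis t a.
rewrite pTPhiE pTE mulr_sumr; apply: eq_bigr => b _.
exact: pTPhiPsi_factor.
Qed.

End BobSideIndependence.

Theorem lemma3 (R : realType) (S T Phi Psi : finType)
    (p : S -> T -> Phi -> Psi -> R) :
  dist4 p -> states_indep p -> entangled p ->
  (forall (a1 a2 : Phi) (t : T), 0 < pPhi p a1 -> 0 < pPhi p a2 ->
     pTPhi p t a1 / pPhi p a1 = pTPhi p t a2 / pPhi p a2) /\
  (forall (a : Phi) (t : T), 0 < pPhi p a ->
     pTPhi p t a / pPhi p a = pT p t).
Proof.
move=> [p_ge0 _] ind [dis _].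
have cond_pT a t : 0 < pPhi p a -> pTPhi p t a / pPhi p a = pT p t.
  by move=> a_gt0; rewrite (pTPhi_factor p_ge0 ind dis) mulrAC mulfV ?mul1r // gt_eqF.
by split=> [a1 a2 t a1_gt0 a2_gt0|//]; rewrite !cond_pT.
Qed.
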